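(* Let $H=\ell^2(\mathbb{N})$ with its standard orthonormal basis, $K(H)$ the compact operators on $H$ represented by infinite matrices, and let $A=(a_{ij})\in\ell^\infty(\mathbb{N}^2)$ be such that $S_A(T)=A\circ T$ is a nonzero $*$-preserving map $S_A\colon K(H)\to K(H)$ (i.e. $S_A(T^* )=S_A(T)^*$). If $S_A$ is multiplicative, then $|a_{ij}|=1$ and $a_{ii}=1$ for all $i,j$.
   Context: $A\circ T$ is the entrywise product of $A$ with the matrix of $T$; $\ell^\infty(\mathbb{N}^2)$ denotes infinite matrices with uniformly bounded entries; multiplicative means $S_A(BC)=S_A(B)S_A(C)$ for all $B,C\in K(H)$. *)

From HB Require Import structures.
From mathcomp Require Import all_boot all_order all_algebra.
From mathcomp Require Import all_classical all_reals all_analysis.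
From mathcomp Require Import complex.
Set Implicit Arguments. Unset Strict Implicit. Unset Printing Implicit Defensive.
Import Order.TTheory GRing.Theory Num.Theory.
Import numFieldTopology.Exports numFieldNormedType.Exports.
Local Open Scope ring_scope.
Local Open Scope classical_set_scope.

(* Vectors of H = l^2(N) are sequences x : nat -> R[i] (coordinates in the
   standard orthonormal basis); operators are infinite matrices
   T : nat -> nat -> R[i], with T i j = <T e_j, e_i>. *)

Section L2.
Variable R : realType.
(* the cast to numFieldType equips R[i] with its norm (modulus) topology *)
Local Notation C := (R[i] : numFieldType).

Definition l2 (x : nat -> C) : Prop :=
  cvgn (series (fun n => ComplexField.Normc.normc (x n) ^+ 2)).

Definition l2norm2 (x : nat -> C) : R :=
  limn (series (fun n => ComplexField.Normc.normc (x n) ^+ 2)).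

Definition mxapply (T : nat -> nat -> C) (x : nat -> C) : nat -> C :=
  fun i => limn (series (fun j => (T i j * x j : C))).

Definition bounded_op (T : nat -> nat -> C) : Prop :=
  [/\ (forall x, l2 x -> forall i, cvgn (series (fun j => (T i j * x j : C)))),
      (forall x, l2 x -> l2 (mxapply T x)) &
      exists M : R, forall x, l2 x -> l2norm2 (mxapply T x) <= M * l2norm2 x].

Definition compact_op (T : nat -> nat -> C) : Prop :=
  bounded_op T /\
  forall u : nat -> nat -> C,
    (forall n, l2 (u n)) ->
    (exists M : R, forall n, l2norm2 (u n) <= M) ->
    exists phi : nat -> nat, {homo phi : m n / (m < n)%N} /\
      exists y, l2 y /\
        (fun n => l2norm2 (fun i => mxapply T (u (phi n)) i - y i)) @ \oo --> 0.

Definition mxmul (B D : nat -> nat -> C) : nat -> nat -> C :=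
  fun i j => limn (series (fun k => (B i k * D k j : C))).

Definition mxadj (T : nat -> nat -> C) : nat -> nat -> C :=
  fun i j => (T j i)^*.

Definition schur (A T : nat -> nat -> C) : nat -> nat -> C :=
  fun i j => A i j * T i j.

End L2.

(* The matrix units E_ij are compact, and S_A(E_ij) = a_ij E_ij.
   Multiplicativity on E_ij E_jk = E_ik gives a_ik = a_ij a_jk, and
   *-preservation on E_ij^* = E_ji gives a_ji = conj a_ij.  Since S_A is nonzero
   some a_pq is nonzero, and a_pq = a_pp a_pq forces a_pp = 1; then
   a_ii = a_ip a_pi = |a_pi|^2 = a_pi a_ip = a_pp = 1, and
   |a_ij|^2 = a_ij a_ji = a_ii = 1. *)
From HB Require Import structures.
From mathcomp Require Import all_boot all_order all_algebra.
From mathcomp Require Import all_classical all_reals all_analysis.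
From mathcomp Require Import complex lra.
Set Implicit Arguments. Unset Strict Implicit. Unset Printing Implicit Defensive.
Import Order.TTheory GRing.Theory Num.Theory.
Import numFieldTopology.Exports numFieldNormedType.Exports.
Local Open Scope ring_scope.
Local Open Scope classical_set_scope.

Local Notation normc := ComplexField.Normc.normc.

Section CocycleMatrix.
Variables (F : numClosedFieldType) (I : Type) (a : I -> I -> F).
Hypothesis a_mul : forall i j k, a i k = a i j * a j k.
Hypothesis a_adj : forall i j, a j i = (a i j)^*.

Lemma cocycle_diag_eq1 : (exists p q, a p q != 0) -> forall i, a i i = 1.
Proof.
move=> [p [q apq_neq0]] i.
have app : a p p = 1 by apply: (mulIf apq_neq0); rewrite mul1r -a_mul.
by rewrite (a_mul i p i) (a_adj p i) mulrC -(a_adj p i) -a_mul.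
Qed.

Lemma cocycle_norm_eq1 i j : a i i = 1 -> `|a i j| = 1.
Proof.
move=> aii; apply/eqP; rewrite -sqrp_eq1 ?normr_ge0 //.
by rewrite normCK -a_adj -a_mul aii.
Qed.

End CocycleMatrix.

Lemma cvgn_series_single (K : numFieldType) (f : nat -> K) j :
  (forall b, b != j -> f b = 0) -> series f @ \oo --> f j.
Proof.
move=> fj; apply: cvg_near_cst; exists j.+1 => // n /= jn.
rewrite /series /= (bigD1_seq j) //= ?mem_iota ?iota_uniq ?add0n ?subn0 //.
by rewrite big1 ?addr0.
Qed.

Lemma limn_series_single (K : numFieldType) (f : nat -> K) j :
  (forall b, b != j -> f b = 0) -> limn (series f) = f j.
Proof. by move=> fj; apply: cvg_lim => //; exact: cvgn_series_single. Qed.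

Lemma le_term_series (K : realFieldType) (f : nat -> K) j :
  (forall n, 0 <= f n) -> f j <= series f j.+1.
Proof.
move=> f_ge0; rewrite /series /= (bigD1_seq j) ?mem_iota ?iota_uniq //=.
by rewrite lerDl sumr_ge0.
Qed.

Lemma normr_le_sqr_add1 (K : realFieldType) (x M : K) : x ^+ 2 <= M -> `|x| <= M + 1.
Proof.
move=> xM; have x2 : `|x| ^+ 2 = x ^+ 2 by rewrite real_normK // num_real.
have := normr_ge0 x; nra.
Qed.

Lemma increasing_seq_ge (f : nat -> nat) : increasing_seq f -> forall n, (n <= f n)%N.
Proof.
move=> f_inc; elim=> // n ih; apply: leq_ltn_trans ih _.
by have := leW_mono f_inc n n.+1; rewrite !ltEnat /= ltnSn.
Qed.

Lemma increasing_seq_cvg (f : nat -> nat) : increasing_seq f -> f @ \oo --> \oo.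
Proof.
move=> f_inc P [N _ PN]; exists N => // m /= Nm; apply: PN.
by rewrite /= (leq_trans Nm) // increasing_seq_ge.
Qed.

Section ComplexSequences.
Variable R : realType.
Local Notation C := (R[i] : numFieldType).

Lemma sqr_normc (z : R[i]) : normc z ^+ 2 = complex.Re z ^+ 2 + complex.Im z ^+ 2.
Proof. by case: z => x y /=; rewrite sqr_sqrtr // addr_ge0 // sqr_ge0. Qed.

Lemma bounded_normc_cvg_subseq (u : nat -> C) (M : R) :
  (forall n, normc (u n) ^+ 2 <= M) ->
  exists2 phi : nat -> nat, increasing_seq phi &
    exists z : C, (fun n => normc (u (phi n) - z) ^+ 2) @ \oo --> 0.
Proof.
move=> uM; pose r n := complex.Re (u n); pose s n := complex.Im (u n).
have bounded_part (v : nat -> R) : (forall n, v n ^+ 2 <= M) -> bounded_fun v.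
  move=> vM; exists (M + 1); split; first exact: num_real.
  by move=> B MB n _ /=; apply: le_trans (normr_le_sqr_add1 (vM n)) (ltW MB).
have le_sqr_addr (v w : R) : v ^+ 2 <= v ^+ 2 + w ^+ 2 by rewrite lerDl sqr_ge0.
have r_bd : bounded_fun r.
  apply: bounded_part => n; apply: le_trans (uM n); rewrite sqr_normc.
  exact: le_sqr_addr.
have [f1 f1_inc r_cvg] := bolzano_weierstrass r_bd.
set a := limn (r \o f1) in r_cvg.
have s_bd : bounded_fun (s \o f1).
  apply: bounded_part => n; apply: le_trans (uM (f1 n)); rewrite sqr_normc addrC.
  exact: le_sqr_addr.
have [f2 f2_inc s_cvg] := bolzano_weierstrass s_bd.
set b := limn (s \o f1 \o f2) in s_cvg.
exists (f1 \o f2); first by move=> m n /=; rewrite !(f1_inc, f2_inc).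
exists (@Complex R a b).
have ra : (fun n => r (f1 (f2 n)) - a) @ \oo --> 0.
  rewrite -(subrr a); apply: cvgB; last exact: cvg_cst.
  exact: cvg_comp (increasing_seq_cvg f2_inc) r_cvg.
have sb : (fun n => s (f1 (f2 n)) - b) @ \oo --> 0.
  by rewrite -(subrr b); apply: cvgB => //; exact: cvg_cst.
suff -> : (fun n => normc (u ((f1 \o f2) n) - Complex a b) ^+ 2) =
    (fun n => (r (f1 (f2 n)) - a) * (r (f1 (f2 n)) - a) +
              (s (f1 (f2 n)) - b) * (s (f1 (f2 n)) - b)).
  by have := cvgD (cvgM ra ra) (cvgM sb sb); rewrite mulr0 addr0; apply.
apply/funext => n; rewrite sqr_normc /r /s /=.
by case: (u (f1 (f2 n))) => x y; rewrite /= !expr2.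
Qed.

End ComplexSequences.

Section MatrixUnits.
Variable R : realType.
Local Notation C := (R[i] : numFieldType).

Definition basisvec (i : nat) (c : C) : nat -> C :=
  fun a => if a == i then c else 0.

Definition mxunit (i j : nat) (c : C) : nat -> nat -> C :=
  fun a b => if (a == i) && (b == j) then c else 0.

Lemma l2_basisvec i c : l2 (basisvec i c).
Proof.
apply/cvg_ex; exists (normc c ^+ 2).
have := @cvgn_series_single _ (fun n => normc (basisvec i c n) ^+ 2) i.
rewrite /basisvec eqxx; apply => b /negbTE ->.
by rewrite ComplexField.Normc.normc0 expr0n.
Qed.

Lemma l2norm2_basisvec i c : l2norm2 (basisvec i c) = normc c ^+ 2.
Proof.
rewrite /l2norm2 (@limn_series_single _ _ i) /basisvec ?eqxx // => b /negbTE ->.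
by rewrite ComplexField.Normc.normc0 expr0n.
Qed.

Lemma le_l2norm2 (x : nat -> C) j : l2 x -> normc (x j) ^+ 2 <= l2norm2 x.
Proof.
move=> x_l2; pose f n := normc (x n) ^+ 2.
have f_ge0 n : 0 <= f n by exact: sqr_ge0.
apply: le_trans (le_term_series j f_ge0) (nondecreasing_cvgn_le _ x_l2 j.+1).
by move=> m n mn; exact: (nondecreasing_series (fun k _ _ => f_ge0 k)).
Qed.

Lemma mxapply_mxunit i j c x : mxapply (mxunit i j c) x = basisvec i (c * x j).
Proof.
apply/funext => a; rewrite /mxapply (@limn_series_single _ _ j).
  by rewrite /mxunit /basisvec eqxx andbT; case: ifP; rewrite ?mul0r.
by move=> b /negbTE bj; rewrite /mxunit bj andbF mul0r.
Qed.

Lemma bounded_op_mxunit i j c : bounded_op (mxunit i j c).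
Proof.
split.
- move=> x _ a; apply/cvg_ex; exists (mxunit i j c a j * x j).
  apply: cvgn_series_single => b /negbTE bj.
  by rewrite /mxunit bj andbF mul0r.
- by move=> x _; rewrite mxapply_mxunit; exact: l2_basisvec.
- exists (normc c ^+ 2) => x x_l2.
  rewrite mxapply_mxunit l2norm2_basisvec ComplexField.Normc.normcM exprMn.
  by rewrite ler_wpM2l ?sqr_ge0 // le_l2norm2.
Qed.

Lemma compact_op_mxunit i j c : compact_op (mxunit i j c).
Proof.
split; first exact: bounded_op_mxunit.
move=> u u_l2 [M uM].
have ujM n : normc (u n j) ^+ 2 <= M by exact: le_trans (le_l2norm2 j (u_l2 n)) (uM n).
have [phi phi_inc [z uz]] := bounded_normc_cvg_subseq ujM.
exists phi; split.
  by move=> m n mn; have := leW_mono phi_inc m n; rewrite !ltEnat /= mn.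
exists (basisvec i (c * z)); split; first exact: l2_basisvec.
have -> : (fun n => l2norm2 (fun a => mxapply (mxunit i j c) (u (phi n)) a
                                      - basisvec i (c * z) a))
          = (fun n => normc c ^+ 2 * normc (u (phi n) j - z) ^+ 2).
  apply/funext => n; rewrite mxapply_mxunit.
  have -> : (fun a => basisvec i (c * u (phi n) j) a - basisvec i (c * z) a)
            = basisvec i (c * (u (phi n) j - z)).
    by apply/funext => a; rewrite /basisvec mulrBr; case: ifP; rewrite ?subr0.
  by rewrite l2norm2_basisvec ComplexField.Normc.normcM exprMn.
by rewrite -(mulr0 (normc c ^+ 2)); apply: cvgM => //; exact: cvg_cst.
Qed.

Lemma mxmul_mxunit i j k c d : mxmul (mxunit i j c) (mxunit j k d) = mxunit i k (c * d).
Proof.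
apply/funext => a; apply/funext => b; rewrite /mxmul (@limn_series_single _ _ j).
  rewrite /mxunit !eqxx andbT.
  by case: (a == i); case: (b == k); rewrite ?mul0r ?mulr0.
by move=> l /negbTE lj; rewrite /mxunit lj andbF mul0r.
Qed.

Lemma mxadj_mxunit i j c : mxadj (mxunit i j c) = mxunit j i c^*.
Proof.
apply/funext => a; apply/funext => b; rewrite /mxadj /mxunit andbC.
by case: ifP => _; rewrite ?conjC0.
Qed.

Lemma schur_mxunit (A : nat -> nat -> C) i j :
  schur A (mxunit i j 1) = mxunit i j (A i j).
Proof.
apply/funext => a; apply/funext => b; rewrite /schur /mxunit.
by case: ifP => [/andP[/eqP-> /eqP->]|_]; rewrite ?mulr1 ?mulr0.
Qed.

Lemma mxunit_inj i j : injective (mxunit i j).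
Proof. by move=> c d /(congr1 (fun T => T i j)); rewrite /mxunit !eqxx; apply. Qed.

Lemma schur_neq0_entry (A T : nat -> nat -> C) :
  schur A T <> (fun _ _ => 0) -> exists p q, A p q != 0.
Proof.
apply: contra_notP => A0; apply/funext => p; apply/funext => q; rewrite /schur.
have [->|Apq] := eqVneq (A p q) 0; first by rewrite mul0r.
by case: A0; exists p, q.
Qed.

End MatrixUnits.

Theorem corollary4p4 (R : realType) (A : nat -> nat -> R[i]) :
  (exists M : R, forall i j, ComplexField.Normc.normc (A i j) <= M) ->
  (forall T, compact_op T -> compact_op (schur A T)) ->
  (exists T, compact_op T /\ schur A T <> (fun _ _ => 0)) ->
  (forall T, compact_op T -> schur A (mxadj T) = mxadj (schur A T)) ->
  (forall B D, compact_op B -> compact_op D ->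
     schur A (mxmul B D) = mxmul (schur A B) (schur A D)) ->
  forall i j, `|A i j| = 1 /\ A i i = 1.
Proof.
move=> _ _ [T [_ AT_neq0]] S_adj S_mul.
have A_mul i j k : A i k = A i j * A j k.
  have := S_mul _ _ (compact_op_mxunit i j 1) (compact_op_mxunit j k 1).
  by rewrite mxmul_mxunit mulr1 !schur_mxunit mxmul_mxunit => /mxunit_inj.
have A_adj i j : A j i = (A i j)^*.
  have := S_adj _ (compact_op_mxunit i j 1).
  by rewrite mxadj_mxunit conjC1 !schur_mxunit mxadj_mxunit => /mxunit_inj.
have A_diag := cocycle_diag_eq1 A_mul A_adj (schur_neq0_entry AT_neq0).
by move=> i j; split; [exact: cocycle_norm_eq1 | exact: A_diag].
Qed.
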